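(* Let $X$ and $Y$ be Tychonoff spaces with $Y$ a $P$-space, and let $f:X\to Y$ be a nearly perfect mapping. Then $f(N(X))=N(Y)$.
   Context: A space $X$ is Menger if for each sequence $(\mathcal{U}_n)$ of open covers of $X$ there is a sequence $(\mathcal{V}_n)$ with each $\mathcal{V}_n$ a finite subset of $\mathcal{U}_n$ and $\bigcup_{n}\bigcup\mathcal{V}_n=X$. $X$ is locally Menger at $x$ if there are an open set $U$ and a Menger subspace $M$ of $X$ with $x\in U\subseteq M$; $N(X)$ denotes the set of points of $X$ at which $X$ is not locally Menger. A $P$-space is a space in which every countable intersection of open sets is open. A mapping $f:X\to Y$ is nearly perfect if it is a closed continuous surjection such that $f^{-1}(y)$ is Menger for every $y\in Y$. *)

From HB Require Import structures.
From mathcomp Require Import all_boot all_algebra.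
From mathcomp Require Import all_classical all_reals all_analysis.
From mathcomp Require Import Rstruct Rstruct_topology.
Set Implicit Arguments. Unset Strict Implicit. Unset Printing Implicit Defensive.
Import numFieldNormedType.Exports.
Local Open Scope classical_set_scope.

Definition tychonoff_space (T : topologicalType) : Prop :=
  @accessible_space T /\
  forall (x : T) (B : set T), closed B -> ~ B x ->
    exists f : T -> Rdefinitions.R,
      continuous f /\ f x = 0%R /\ (forall b, B b -> f b = 1%R).

(** The subspace A of T is Menger.  Open covers of the subspace A are
    represented (as usual) by families of open sets of T covering A. *)
Definition menger_set (T : topologicalType) (A : set T) : Prop :=
  forall U : nat -> set (set T),
    (forall n, (forall W, U n W -> open W) /\ A `<=` \bigcup_(W in U n) W) ->
    exists V : nat -> set (set T),
      (forall n, finite_set (V n) /\ V n `<=` U n) /\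
      A `<=` \bigcup_n \bigcup_(W in V n) W.

Definition locally_menger_at (T : topologicalType) (x : T) : Prop :=
  exists (U M : set T), open U /\ menger_set M /\ U x /\ U `<=` M.

Definition N_set (T : topologicalType) : set T :=
  [set x | ~ locally_menger_at x].

Definition P_space (T : topologicalType) : Prop :=
  forall G : nat -> set T, (forall n, open (G n)) -> open (\bigcap_n G n).

Definition closed_map (S T : topologicalType) (f : S -> T) : Prop :=
  forall C : set S, closed C -> closed (f @` C).

Definition nearly_perfect (S T : topologicalType) (f : S -> T) : Prop :=
  [/\ closed_map f, continuous f, (forall y : T, exists x, f x = y) &
      (forall y : T, menger_set (f @^-1` [set y]))].
Arguments N_set T : clear implicits.

From mathcomp Require Import all_boot all_algebra.
From mathcomp Require Import all_classical all_reals all_analysis.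
From Stdlib Require Cantor.
Local Open Scope classical_set_scope.

(** If [y] is not locally Menger but every point of the Menger fiber
    [f^-1(y)] were, countably many open sets [U_x], each inside a Menger set
    [M_x], would cover the fiber.  Since [f] is closed, the points whose
    fiber lies in their union form an open neighbourhood of [y], contained in
    the Menger set [f(U M_x)].  Conversely, preimages of Menger sets under
    closed maps with Menger fibers are Menger, so [x] is locally Menger
    whenever [f x] is. *)

Definition selection_cover {T : Type} (U : nat -> set (set T)) (A : set T) :=
  exists V : nat -> set (set T),
    (forall n, finite_set (V n) /\ V n `<=` U n) /\
    A `<=` \bigcup_n \bigcup_(W in V n) W.

Section SelectionCover.
Variable T : Type.
Implicit Types (U : nat -> set (set T)) (A B : set T).

Lemma selection_cover_sub U A B :
  A `<=` B -> selection_cover U B -> selection_cover U A.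
Proof. by move=> AB [V [HV BV]]; exists V; split=> // x /AB /BV. Qed.

Lemma selection_cover_finite_bigcup U (I : Type) (F : set I) (A : I -> set T) :
  finite_set F -> (forall i, F i -> selection_cover U (A i)) ->
  selection_cover U (\bigcup_(i in F) A i).
Proof.
move=> finF HA.
have HV i : exists V : nat -> set (set T), F i ->
    (forall n, finite_set (V n) /\ V n `<=` U n) /\
    A i `<=` \bigcup_n \bigcup_(W in V n) W.
  have [/HA [V HV]|nFi] := pselect (F i); first by exists V.
  by exists (fun _ => set0) => /nFi.
have [V {}HV] := choice HV.
exists (fun n => \bigcup_(i in F) V i n); split.
  move=> n; split; first by apply: bigcup_finite => // i /HV [/(_ n) []].
  by apply: bigcup_sub => i /HV [/(_ n) []].
move=> x [i Fi /(HV i Fi).2 [n _ [W VW Wx]]].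
by exists n => //; exists W => //; exists i.
Qed.

Lemma selection_cover_bigcup U (A : nat -> set T) :
  (forall k, selection_cover (fun m => U (Cantor.to_nat (k, m))) (A k)) ->
  selection_cover U (\bigcup_k A k).
Proof.
move=> /choice [V HV].
exists (fun n => V (Cantor.of_nat n).1 (Cantor.of_nat n).2); split.
  move=> n; have := (HV (Cantor.of_nat n).1).1 (Cantor.of_nat n).2.
  by rewrite -surjective_pairing Cantor.cancel_to_of.
move=> x [k _ /(HV k).2 [m _ [W VW Wx]]].
by exists (Cantor.to_nat (k, m)) => //; exists W; rewrite ?Cantor.cancel_of_to.
Qed.

Lemma selection_cover_image (S : Type) (f : T -> S) (U : nat -> set (set S)) A :
  selection_cover (fun n => preimage f @` U n) A -> selection_cover U (f @` A).
Proof.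
move=> [V [HV AV]].
have Hg (nP : nat * set T) : exists W, (preimage f @` U nP.1) nP.2 ->
    U nP.1 W /\ f @^-1` W = nP.2.
  have [[W UW <-]|nUP] := pselect ((preimage f @` U nP.1) nP.2).
    by exists W.
  by exists set0 => /nUP.
have [g {}Hg] := choice Hg.
exists (fun n => [set g (n, P) | P in V n]); split.
  move=> n; split; first exact/finite_image/(HV n).1.
  by move=> _ [P VP <-]; apply: (Hg (n, P) ((HV n).2 _ VP)).1.
move=> _ [x /AV [n _ [P VP Px]] <-].
exists n => //; exists (g (n, P)); first by exists P.
by have [_ /= PE] := Hg (n, P) ((HV n).2 _ VP); rewrite -PE in Px.
Qed.

End SelectionCover.

Section MengerSets.
Variable T : topologicalType.
Implicit Types (A M : set T).

Lemma selection_cover_open (U : nat -> set (set T)) A :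
  (forall n W, U n W -> open W) -> selection_cover U A ->
  exists G, [/\ open G, A `<=` G & selection_cover U G].
Proof.
move=> oU [V [HV AV]]; exists (\bigcup_n \bigcup_(W in V n) W); split => //.
  by apply: bigcup_open => n _; apply: bigcup_open => W /(HV n).2 /oU.
by exists V; split.
Qed.

Lemma menger_bigcup_finite (I : Type) (F : set I) (M : I -> set T) :
  finite_set F -> (forall i, F i -> menger_set (M i)) ->
  menger_set (\bigcup_(i in F) M i).
Proof.
move=> finF HM U HU; apply: selection_cover_finite_bigcup => // i Fi.
apply: HM => // n; split; first exact: (HU n).1.
by move=> x Mx; apply: (HU n).2; exists i.
Qed.

Lemma menger_bigcup (M : nat -> set T) :
  (forall k, menger_set (M k)) -> menger_set (\bigcup_k M k).
Proof.
move=> HM U HU; apply: selection_cover_bigcup => k.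
apply: HM => m; split; first exact: (HU _).1.
by move=> x Mx; apply: (HU _).2; exists k.
Qed.

End MengerSets.

Lemma menger_image (S T : topologicalType) (f : S -> T) (A : set S) :
  continuous f -> menger_set A -> menger_set (f @` A).
Proof.
move=> /continuousP fc HA U HU; apply: selection_cover_image; apply: HA => n.
split; first by move=> _ [W /(HU n).1 oW <-]; exact: fc.
move=> x Ax; have [W UW Wfx] := (HU n).2 (f x) (ex_intro2 _ _ x Ax erefl).
by exists (f @^-1` W) => //; exists W.
Qed.

Section SmallImage.
Context {S T : topologicalType} (f : S -> T).

Definition small_image (G : set S) : set T := [set y | f @^-1` [set y] `<=` G].

Lemma small_imageE (G : set S) : small_image G = ~` (f @` ~` G).
Proof.
apply/seteqP; split=> [y yG [x nGx fxy]|y nfG x fxy]; first exact/nGx/yG.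
by apply: contrapT => nGx; apply: nfG; exists x.
Qed.

Lemma small_image_open (G : set S) :
  closed_map f -> open G -> open (small_image G).
Proof.
by move=> fcl oG; rewrite small_imageE openC; apply: fcl; rewrite closedC.
Qed.

Lemma preimage_small_image (G : set S) : f @^-1` small_image G `<=` G.
Proof. by move=> x; apply. Qed.

Lemma small_image_sub_image (G : set S) :
  (forall y, exists x, f x = y) -> small_image G `<=` f @` G.
Proof.
by move=> fsurj y yG; have [x fxy] := fsurj y; exists x => //; apply: yG.
Qed.

End SmallImage.

Section ClosedMapMengerFibers.
Context {S T : topologicalType} {f : S -> T}.
Hypotheses (fcl : closed_map f)
  (fib_menger : forall y, menger_set (f @^-1` [set y])).

Lemma menger_preimage (M : set T) :
  menger_set M -> menger_set (f @^-1` M).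
Proof.
move=> HM U HU.
have HG k y : exists G, M y -> [/\ open G, f @^-1` [set y] `<=` G &
    selection_cover (fun m => U (Cantor.to_nat (k, m))) G].
  have [My|nMy] := pselect (M y); last by exists set0 => /nMy.
  suff [G HGk] : exists G, [/\ open G, f @^-1` [set y] `<=` G &
      selection_cover (fun m => U (Cantor.to_nat (k, m))) G] by exists G.
  apply: selection_cover_open => [m|]; first exact: (HU _).1.
  apply: fib_menger => m; split; first exact: (HU _).1.
  by move=> x /= fxy; apply: (HU _).2; rewrite /preimage /= fxy.
have [G {}HG] : exists G : nat -> T -> set S, forall k y, M y ->
    [/\ open (G k y), f @^-1` [set y] `<=` G k y &
      selection_cover (fun m => U (Cantor.to_nat (k, m))) (G k y)].
  exists (fun k => projT1 (choice (HG k))) => k.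
  exact: projT2 (choice (HG k)).
(* The small images of the [G k y] cover [M]; for each [k], the Menger
   property of [M] retains finitely many of them, and the finitely many
   selections from [U (k, _)] behind those cover their preimage. *)
pose C k := [set small_image f (G k y) | y in M].
have [|F [HF MF]] := HM C.
  move=> k; split.
    by move=> _ [y /(HG k y) [oG _ _] <-]; exact: small_image_open.
  move=> y My; exists (small_image f (G k y)); first by exists y.
  by have [] := HG k y My.
apply: (@selection_cover_sub _ _ _ (\bigcup_k \bigcup_(P in F k) f @^-1` P)).
  by move=> x /MF [k _ [P FP Pfx]]; exists k => //; exists P.
apply: selection_cover_bigcup => k.
apply: selection_cover_finite_bigcup; first exact: (HF k).1.
move=> _ /(HF k).2 [y My <-]; have [_ _ HGky] := HG k y My.
exact: selection_cover_sub (preimage_small_image f _) HGky.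
Qed.

Hypothesis fc : continuous f.

Lemma locally_menger_preimage (x : S) :
  locally_menger_at (f x) -> locally_menger_at x.
Proof.
move=> [U [M [oU [mM [Ufx UM]]]]].
exists (f @^-1` U), (f @^-1` M); split; first exact: open_comp.
by split; [exact: menger_preimage | split => // z /UM].
Qed.

Lemma locally_menger_of_fiber : (forall y, exists x, f x = y) ->
  forall y, (forall x, f x = y -> locally_menger_at x) -> locally_menger_at y.
Proof.
move=> fsurj y Hlm.
pose Cov := [set W : set S | open W /\ exists M, menger_set M /\ W `<=` M].
have [|V [HV fibV]] := fib_menger y (fun _ => Cov).
  move=> _; split=> [W []//|x /Hlm [W [M [oW [mM [Wx WM]]]]]].
  by exists W => //; split=> //; exists M.
have HMW W : exists M, Cov W -> menger_set M /\ W `<=` M.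
  by have [[_ [M HM]]|nW] := pselect (Cov W); [exists M | exists set0 => /nW].
have [MW {}HMW] := choice HMW.
pose G := \bigcup_n \bigcup_(W in V n) W.
exists (small_image f G), (f @` \bigcup_n \bigcup_(W in V n) MW W).
split; [apply: small_image_open => //|split; [|split]].
- by apply: bigcup_open => n _; apply: bigcup_open => W /(HV n).2 [].
- apply: menger_image => //; apply: menger_bigcup => n.
  apply: menger_bigcup_finite => [|W /(HV n).2 /HMW []//].
  exact: (HV n).1.
- exact: fibV.
- apply: subset_trans (small_image_sub_image f G fsurj) _; apply: image_subset.
  by apply: subset_bigcup => n _; apply: subset_bigcup => W /(HV n).2 /HMW [].
Qed.

End ClosedMapMengerFibers.

Theorem theorem5p15 (X Y : topologicalType) (f : X -> Y) :
  tychonoff_space X -> tychonoff_space Y -> P_space Y -> nearly_perfect f ->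
  f @` N_set X = N_set Y.
Proof.
move=> _ _ _ [fcl fc fsurj fib_menger]; apply/seteqP; split.
  by move=> _ [x NX <-] /(locally_menger_preimage fcl fib_menger fc).
move=> y Ny; apply: contrapT => NXy; apply: Ny.
apply: (locally_menger_of_fiber fcl fib_menger fc fsurj) => x fxy.
by apply: contrapT => NX; apply: NXy; exists x.
Qed.
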